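(* For $i=1,\dots,d$ let $\omega_i\subseteq\mathbb{R}$ be a nonempty open interval and $f_i:\omega_i\to\mathbb{R}$ a univariate function of Legendre type; let $\Omega=\prod_{i=1}^d\omega_i$ and $F(x)=\sum_{i=1}^d f_i(x_i)$ on $\Omega$, with Bregman divergence $D_F$. Let $P=\{x\in\mathbb{R}^d: x_j=c\}$ be an axis-aligned hyperplane (for some $j\in\{1,\dots,d\}$, $c\in\mathbb{R}$) with $P\cap\Omega\neq\emptyset$, and let $q\in\Omega$. Then the orthogonal projection $q_P=(q_1,\dots,q_{j-1},c,q_{j+1},\dots,q_d)$ of $q$ onto $P$ lies in $P\cap\Omega$ and is the unique minimizer over $p\in P\cap\Omega$ of $D_F(q\|p)$, and also the unique minimizer over $p\in P\cap\Omega$ of $D_F(p\|q)$; i.e. the Bregman projection of $q$ onto $P$, computed in either direction, coincides with the orthogonal projection.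
   Context: A function $G:U\to\mathbb{R}$ on a nonempty open convex set $U$ is of Legendre type if it is differentiable, strictly convex, and, if $\partial U\neq\emptyset$, $\|\nabla G(x)\|\to\infty$ as $x\to\partial U$. The Bregman divergence generated by $G$ is $D_G(x\|y)=G(x)-G(y)-\langle\nabla G(y),x-y\rangle$. For $F=\sum_i f_i(x_i)$ one has $D_F(x\|y)=\sum_i D_{f_i}(x_i\|y_i)$. *)

From HB Require Import structures.
From mathcomp Require Import all_boot all_order all_algebra.
From mathcomp Require Import all_classical all_reals all_analysis.
Set Implicit Arguments. Unset Strict Implicit. Unset Printing Implicit Defensive.
Import Order.TTheory GRing.Theory Num.Theory.
Import numFieldNormedType.Exports.
Local Open Scope classical_set_scope.
Local Open Scope ring_scope.

Definition in_oint {R : realType} (a b : \bar R) (x : R) : Prop :=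
  (a < x%:E)%E /\ (x%:E < b)%E.

Definition legendre1 {R : realType} (a b : \bar R) (f : R -> R) : Prop :=
  [/\ (a < b)%E,
      (forall x, in_oint a b x -> derivable f x 1),
      (forall x y t, in_oint a b x -> in_oint a b y -> x <> y ->
          0 < t < 1 -> f (t * x + (1 - t) * y) < t * f x + (1 - t) * f y),
      (forall a0 : R, a = a0%:E -> `|derive1 f x| @[x --> a0^'+] --> +oo)
    & (forall b0 : R, b = b0%:E -> `|derive1 f x| @[x --> b0^'-] --> +oo)].

Definition in_box {R : realType} {d : nat} (a b : 'I_d -> \bar R)
  (x : 'I_d -> R) : Prop := forall i, in_oint (a i) (b i) (x i).

Definition sepF {R : realType} {d : nat} (f : 'I_d -> R -> R)
  (x : 'I_d -> R) : R := \sum_(i < d) f i (x i).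

Definition bregman {R : realType} {d : nat} (f : 'I_d -> R -> R)
  (x y : 'I_d -> R) : R :=
  sepF f x - sepF f y - \sum_(i < d) derive1 (f i) (y i) * (x i - y i).

Definition ortho_proj {R : realType} {d : nat} (j : 'I_d) (c : R)
  (q : 'I_d -> R) : 'I_d -> R := fun i => if i == j then c else q i.

(* D_F is a sum of one-dimensional Bregman divergences D_i(x || y), each of
   which is nonnegative and vanishes only on the diagonal, because a
   differentiable strictly convex function lies strictly above its tangent
   lines.  For p in P both p and q_P have j-th coordinate c, so the j-th terms
   of D_F(q || p) and D_F(q || q_P) coincide, while every other term vanishes
   for q_P and not all of them vanish for p <> q_P; the same holds for the
   reverse divergence. *)
From HB Require Import structures.
From mathcomp Require Import all_boot all_order all_algebra.
From mathcomp Require Import all_classical all_reals all_analysis.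
From mathcomp Require Import ring lra.
Import Order.TTheory GRing.Theory Num.Theory.
Import numFieldNormedType.Exports.
Local Open Scope classical_set_scope.
Local Open Scope ring_scope.

Definition bregman1 {R : realType} (f : R -> R) (x y : R) : R :=
  f x - f y - derive1 f y * (x - y).

Definition divergence_on {R : realType} (a b : \bar R) (D : R -> R -> R) :=
  (forall x, D x x = 0) /\
  (forall x y, in_oint a b x -> in_oint a b y -> x <> y -> 0 < D x y).

Section OneDimensional.
Context {R : realType}.
Implicit Types (a b : \bar R) (f : R -> R) (x y t : R).

Lemma in_oint_convex a b x y t :
  in_oint a b x -> in_oint a b y -> 0 < t < 1 ->
  in_oint a b (t * x + (1 - t) * y).
Proof.
move=> [ax xb] [ay yb] /andP[t0 t1]; split.
- case: a ax ay => [a0 ax ay| |_ _] //=; last exact: ltNyr.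
  by rewrite !lte_fin in ax ay *; nra.
- case: b xb yb => [b0 xb yb|_ _|] //=; last exact: ltry.
  by rewrite !lte_fin in xb yb *; nra.
Qed.

Lemma derive1_tangent_le f x y :
  derivable f y 1 ->
  (forall t, 0 < t < 1 -> f (t * x + (1 - t) * y) <= t * f x + (1 - t) * f y) ->
  derive1 f y * (x - y) <= f x - f y.
Proof.
move=> df1 fconv; have dfy : differentiable f y by apply/derivable1_diffP.
have -> : derive1 f y * (x - y) = 'D_(x - y) f y.
  by rewrite deriveE // deriv1E //= mulrC.
have quot : (fun t => t^-1 *: (f (t *: (x - y) + y) - f y)) @ 0^'+ -->
            'D_(x - y) f y.
  exact/cvg_dnbhs_at_right/(@diff_derivable _ _ _ f y (x - y) dfy).
apply: (cvgr_to_le quot); near=> t.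
have /andP[t0 t1] : 0 < t < 1.
  by apply/andP; split; near: t; [exact: nbhs_right_gt | exact: nbhs_right_lt].
rewrite /= -ler_pdivlMl ?invr_gt0 // invrK.
have -> : t *: (x - y) + y = t * x + (1 - t) * y by rewrite /GRing.scale /=; ring.
by have := fconv t; rewrite t0 t1 => /(_ isT); lra.
Unshelve. all: by end_near.
Qed.

Section Legendre.
Variables (a b : \bar R) (f : R -> R).
Hypothesis f_legendre : legendre1 a b f.

Lemma legendre1_convex x y t :
  in_oint a b x -> in_oint a b y -> 0 < t < 1 ->
  f (t * x + (1 - t) * y) <= t * f x + (1 - t) * f y.
Proof.
case: f_legendre => _ _ fconv _ _ ix iy t01.
have [<-|xy] := eqVneq x y; last exact/ltW/(fconv _ _ _ ix iy (elimN eqP xy)).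
by rewrite -!mulrDl subrKC !mul1r.
Qed.

Lemma bregman1_gt0 x y :
  in_oint a b x -> in_oint a b y -> x <> y -> 0 < bregman1 f x y.
Proof.
move=> ix iy xy; have half : 0 < (2^-1 : R) < 1 by apply/andP; split; lra.
(* The tangent inequality is only weak; taking it towards the midpoint m and
   using strict convexity at m makes it strict. *)
set m := 2^-1 * x + (1 - 2^-1) * y.
have im : in_oint a b m by apply: in_oint_convex.
have tangent : derive1 f y * (m - y) <= f m - f y.
  case: f_legendre => _ fder _ _ _.
  by apply: derive1_tangent_le => [|t t01]; [exact: fder | exact: legendre1_convex].
have strict : f m < 2^-1 * f x + (1 - 2^-1) * f y.
  by case: f_legendre => _ _ fconv _ _; exact: fconv.
have my : m - y = 2^-1 * (x - y) by rewrite /m; ring.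
rewrite my in tangent; rewrite /bregman1; lra.
Qed.

Lemma bregman1_divergence : divergence_on a b (bregman1 f).
Proof.
split=> [x|]; last exact: bregman1_gt0.
by rewrite /bregman1 !subrr mulr0 subr0.
Qed.

End Legendre.

Lemma divergence_on_ge0 a b (D : R -> R -> R) x y :
  divergence_on a b D -> in_oint a b x -> in_oint a b y -> 0 <= D x y.
Proof.
move=> [D0 Dpos] ix iy; have [<-|xy] := eqVneq x y; first by rewrite D0.
exact/ltW/(Dpos _ _ ix iy (elimN eqP xy)).
Qed.

Lemma divergence_on_swap {a b} {D : R -> R -> R} :
  divergence_on a b D -> divergence_on a b (fun x y => D y x).
Proof. by move=> [D0 Dpos]; split=> // x y ix iy xy; apply: Dpos => // /esym. Qed.

End OneDimensional.

Lemma ler_lt_sum {R : numDomainType} (I : finType) (F G : I -> R) :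
  (forall i, F i <= G i) -> (exists i, F i < G i) ->
  \sum_i F i < \sum_i G i.
Proof.
move=> FG [i FGi]; rewrite (bigD1 i) //= [ltRHS](bigD1 i) //=.
by apply: ltr_leD => //; apply: ler_sum.
Qed.

Section Separable.
Context {R : realType} {d : nat}.
Implicit Types (a b : 'I_d -> \bar R) (p q : 'I_d -> R).

Lemma bregmanE (f : 'I_d -> R -> R) p q :
  bregman f p q = \sum_i bregman1 (f i) (p i) (q i).
Proof. by rewrite /bregman /sepF -!sumrB. Qed.

Lemma ortho_proj_eq j c q : ortho_proj j c q j = c.
Proof. by rewrite /ortho_proj eqxx. Qed.

Lemma ortho_proj_neq j c q i : i != j -> ortho_proj j c q i = q i.
Proof. by rewrite /ortho_proj => /negbTE ->. Qed.

Lemma in_box_ortho_proj a b j c q :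
  in_oint (a j) (b j) c -> in_box a b q -> in_box a b (ortho_proj j c q).
Proof.
move=> ic bq i; have [->|ij] := eqVneq i j; first by rewrite ortho_proj_eq.
by rewrite ortho_proj_neq.
Qed.

Lemma sum_divergence_ortho_proj_lt {a b} {D : 'I_d -> R -> R -> R} :
  (forall i, divergence_on (a i) (b i) (D i)) -> forall j c p q,
  in_box a b p -> in_box a b q -> p j = c -> p <> ortho_proj j c q ->
  \sum_i D i (q i) (ortho_proj j c q i) < \sum_i D i (q i) (p i).
Proof.
move=> divD j c p q bp bq pj pqP; apply: ler_lt_sum => [i|].
  have [->|ij] := eqVneq i j; first by rewrite ortho_proj_eq pj.
  by rewrite ortho_proj_neq // (divD i).1; apply: divergence_on_ge0.
have [i pqi] : exists i, p i <> ortho_proj j c q i.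
  by apply/existsNP => pq; apply/pqP/funext.
have ij : i != j by apply: contra_notN pqi => /eqP ->; rewrite pj ortho_proj_eq.
exists i; rewrite ortho_proj_neq // (divD i).1; apply: (divD i).2 => //.
by rewrite ortho_proj_neq // in pqi; move/esym.
Qed.

End Separable.

Theorem lemma5 (R : realType) (d : nat) (a b : 'I_d -> \bar R)
  (f : 'I_d -> R -> R) (j : 'I_d) (c : R) (q : 'I_d -> R) :
  (forall i, legendre1 (a i) (b i) (f i)) ->
  (exists p : 'I_d -> R, p j = c /\ in_box a b p) ->
  in_box a b q ->
  let qP := ortho_proj j c q in
  [/\ qP j = c, in_box a b qP,
      (forall p, p j = c -> in_box a b p -> p <> qP ->
         bregman f q qP < bregman f q p)
    & (forall p, p j = c -> in_box a b p -> p <> qP ->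
         bregman f qP q < bregman f p q)].
Proof.
move=> f_legendre [p0 [p0j bp0]] bq qP.
have divB i : divergence_on (a i) (b i) (bregman1 (f i)).
  exact: bregman1_divergence.
split=> [||p pj bp pqP|p pj bp pqP].
- exact: ortho_proj_eq.
- by apply: in_box_ortho_proj; rewrite -?p0j.
- by rewrite !bregmanE; apply: (sum_divergence_ortho_proj_lt divB j c p q).
- have divB' i := divergence_on_swap (divB i).
  by rewrite !bregmanE; apply: (sum_divergence_ortho_proj_lt divB' j c p q).
Qed.
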